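(* Let $q\ge2$ and $\mu,R>0$. There is no sequence of $l_i$-shot ID codes for $\Pi^q_{n_i}$, $i=1,2,\dots$, with $n_i\to\infty$, $l_i/n_i\to0$, $M_i\ge 2^{R n_i^{l_i(q-1)}}$ messages, and type-I and type-II error probabilities satisfying $\lambda_{1,i}<n_i^{-l_i\mu}$ and $\lambda_{2,i}<n_i^{-l_i\mu}$ for all $i$.
   Context: Fix an integer $q\ge 2$ and let $\mathcal A_q=\{1,\dots,q\}$. For $n\ge1$ and $\sigma\in S_n$ (the symmetric group on $\{1,\dots,n\}$), $\sigma\mathbf x=(x_{\sigma^{-1}(1)},\dots,x_{\sigma^{-1}(n)})$ for $\mathbf x\in\mathcal A_q^n$. The $n$-block $q$-ary uniform permutation channel $\Pi^q_n$ has input/output alphabet $\mathcal A_q^n$ and $\Pi^q_n(\mathbf y\mid\mathbf x)=\frac1{n!}\sum_{\sigma\in S_n}\mathbf 1\{\mathbf y=\sigma\mathbf x\}$. Using it $l$ times (independently on each block) gives the channel $W^{(l)}$ on $(\mathcal A_q^n)^l$ with $W^{(l)}(\mathbf y^{(1)},\dots,\mathbf y^{(l)}\mid \mathbf x^{(1)},\dots,\mathbf x^{(l)})=\prod_{s=1}^l\Pi^q_n(\mathbf y^{(s)}\mid\mathbf x^{(s)})$. An $l$-shot ID code with $M$ messages for $\Pi^q_n$ (an ''$(n,l,M,\lambda_1,\lambda_2)$ ID code'') is a family $\{(Q_i,\mathcal D_i)\}_{i=1}^M$ with $Q_i$ a probability distribution on $(\mathcal A_q^n)^l$ and $\mathcal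 D_i\subseteq(\mathcal A_q^n)^l$; its error probabilities are $\lambda_{i\to j}=\sum_{\underline{\mathbf x}}Q_i(\underline{\mathbf x})\sum_{\underline{\mathbf y}\in\mathcal D_j}W^{(l)}(\underline{\mathbf y}\mid\underline{\mathbf x})$ ($i\neq j$), $\lambda_{i\not\to i}=\sum_{\underline{\mathbf x}}Q_i(\underline{\mathbf x})\sum_{\underline{\mathbf y}\notin\mathcal D_i}W^{(l)}(\underline{\mathbf y}\mid\underline{\mathbf x})$, type-I error probability $\lambda_1=\max_i\lambda_{i\not\to i}$, type-II error probability $\lambda_2=\max_{i\ne j}\lambda_{i\to j}$. *)

From HB Require Import structures.
From mathcomp Require Import all_boot all_order all_algebra all_fingroup.
From mathcomp Require Import all_classical all_reals all_analysis.
Set Implicit Arguments. Unset Strict Implicit. Unset Printing Implicit Defensive.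
Import Order.TTheory GRing.Theory Num.Theory.
Local Open Scope ring_scope.

(* Alphabet A_q = {1,..,q} is represented by 'I_q = {0,..,q-1}. *)
Definition word (q n : nat) := {ffun 'I_n -> 'I_q}.

Definition permw (q n : nat) (s : 'S_n) (x : word q n) : word q n :=
  [ffun i => x ((s^-1)%g i)].

Definition PiCh (R : realType) (q n : nat) (y x : word q n) : R :=
  (n`!%:R)^-1 * \sum_(s : 'S_n) (y == permw s x)%:R.

(* inputs/outputs of l uses of the channel *)
Definition block (q n l : nat) := {ffun 'I_l -> word q n}.

Definition Wl (R : realType) (q n l : nat) (ys xs : block q n l) : R :=
  \prod_(s < l) PiCh R (ys s) (xs s).

Record IDcode (R : realType) (q n l M : nat) := {
  idQ : 'I_M -> {ffun block q n l -> R};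
  idD : 'I_M -> {set block q n l};
  idQ_ge0 : forall i x, 0 <= idQ i x;
  idQ_sum1 : forall i, \sum_x idQ i x = 1 }.

Definition lam_to (R : realType) (q n l M : nat) (C : IDcode R q n l M)
    (i j : 'I_M) : R :=
  \sum_(x : block q n l) idQ C i x * \sum_(y in idD C j) Wl R y x.

Definition lam_miss (R : realType) (q n l M : nat) (C : IDcode R q n l M)
    (i : 'I_M) : R :=
  \sum_(x : block q n l) idQ C i x * \sum_(y | y \notin idD C i) Wl R y x.

Definition lambda1 (R : realType) (q n l M : nat) (C : IDcode R q n l M) : R :=
  \big[Num.max/0]_(i < M) lam_miss C i.

Definition lambda2 (R : realType) (q n l M : nat) (C : IDcode R q n l M) : R :=
  \big[Num.max/0]_(i < M) \big[Num.max/0]_(j < M | j != i) lam_to C i j.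

From HB Require Import structures.
From mathcomp Require Import all_boot all_order all_algebra all_fingroup.
From mathcomp Require Import all_classical all_reals all_analysis.
From mathcomp Require Import ring lra zify.
Import Order.TTheory GRing.Theory Num.Theory.
Import numFieldNormedType.Exports.
Set Implicit Arguments. Unset Strict Implicit. Unset Printing Implicit Defensive.
Local Open Scope ring_scope.

(* Inputs of the l-fold permutation channel matter only through their block
   type, the letter counts of each of the l words, and there are
   T = (n+1)^((q-1)l) types.  An ID code is thus a family of distributions P_i
   on T points with acceptance functions h_j such that <P_i, h_i> >= 1 - eps
   and <P_i, h_j> <= eps for i <> j.  The k-th tensor powers of the P_i are
   symmetric, so if there were more than 'C(k + T - 1, k) of them they would
   satisfy a linear relation sum_i c_i P_i^(k) = 0; pairing it with h_j^(k)
   for j maximising |c_j| gives (1 - eps)^k <= (M - 1) eps^k.  For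
   eps = n^(-l mu), k = T/m + 1 and M' = m^(2k) messages, with m a large
   constant power of two, this contradicts 'C(k + T - 1, k) < m^(2k), because
   T = O(n^(l(q-1))) while log M >= rate n^(l(q-1)). *)

Section Channel.
Variable R : realType.

Lemma permwM (q n : nat) (s t : 'S_n) (x : word q n) :
  permw t (permw s x) = permw (s * t)%g x.
Proof. by apply/ffunP => i; rewrite !ffunE invMg permM. Qed.

Lemma PiCh_permw (q n : nat) (s : 'S_n) (y x : word q n) :
  PiCh R y (permw s x) = PiCh R y x.
Proof.
rewrite /PiCh [in RHS](reindex_inj (mulgI s)) /=.
by under [in LHS]eq_bigr do rewrite permwM.
Qed.

Lemma PiCh_ge0 (q n : nat) (y x : word q n) : 0 <= PiCh R y x.
Proof. by rewrite mulr_ge0 ?invr_ge0 // sumr_ge0. Qed.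

Lemma PiCh_sum1 (q n : nat) (x : word q n) : \sum_y PiCh R y x = 1.
Proof.
rewrite /PiCh -big_distrr /= exchange_big /=.
have one_hit (a : word q n) : \sum_y ((y == a)%:R : R) = 1.
  by rewrite (bigD1 a) //= eqxx big1 ?addr0 // => y /negbTE ->.
under eq_bigr do rewrite one_hit.
by rewrite sumr_const card_Sn mulVf // pnatr_eq0 -lt0n fact_gt0.
Qed.

Lemma Wl_ge0 (q n l : nat) (y x : block q n l) : 0 <= Wl R y x.
Proof. by apply: prodr_ge0 => s _; exact: PiCh_ge0. Qed.

Lemma Wl_sum1 (q n l : nat) (x : block q n l) : \sum_y Wl R y x = 1.
Proof.
rewrite /Wl -(bigA_distr_bigA (fun s w => PiCh R w (x s))).
by rewrite big1 // => s _; exact: PiCh_sum1.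
Qed.

End Channel.

Definition letter_count (q n : nat) (w : word q n) (a : 'I_q) : nat :=
  count_mem a [tuple w i | i < n].

(* The count of the last letter is determined by the others, so a type keeps
   only the counts of the first [q - 1] letters: there are [(n+1)^(q-1)] types. *)
Definition word_type (q n : nat) (w : word q n) : {ffun 'I_q.-1 -> 'I_n.+1} :=
  [ffun a => inord (letter_count w (widen_ord (leq_pred q) a))].

Definition block_type (q n l : nat) (x : block q n l) :
  {ffun 'I_l -> {ffun 'I_q.-1 -> 'I_n.+1}} := [ffun s => word_type (x s)].

Lemma letter_count_le (q n : nat) (w : word q n) a : (letter_count w a <= n)%N.
Proof. by rewrite -[X in (_ <= X)%N](size_tuple [tuple w i | i < n]) count_size. Qed.

Lemma sum_letter_count (q n : nat) (w : word q n) :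
  (\sum_(a : 'I_q) letter_count w a)%N = n.
Proof.
rewrite /letter_count -[RHS](size_tuple [tuple w i | i < n]).
elim: (tval _) => [|x s IH]; first by rewrite big1.
rewrite big_split /= IH (bigD1 x) //= eqxx big1 // => a /negbTE.
by rewrite eq_sym => ->.
Qed.

Lemma word_type_letter_count (q n : nat) (w w' : word q n) :
  word_type w = word_type w' -> letter_count w =1 letter_count w'.
Proof.
case: q w w' => [|q] w w' E a; first by case: a.
have E_low (b : 'I_q) : letter_count w (widen_ord (leqnSn q) b) =
                        letter_count w' (widen_ord (leqnSn q) b).
  move/ffunP/(_ b)/(congr1 val): E.
  by rewrite !ffunE /= !inordK ?ltnS ?letter_count_le.
case: (unliftP ord_max a) => [b ->|->].
  suff -> : lift ord_max b = widen_ord (leqnSn q) b by exact: E_low.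
  by apply: val_inj; rewrite /= /bump leqNgt ltn_ord.
have := sum_letter_count w; have := sum_letter_count w'; rewrite !big_ord_recr /=.
rewrite (eq_bigr _ (fun b _ => E_low b)); set S := (\sum_(i < q) _)%N; lia.
Qed.

Lemma word_type_permw (q n : nat) (w w' : word q n) :
  word_type w = word_type w' -> exists s : 'S_n, w = permw s w'.
Proof.
move=> /word_type_letter_count E.
have : perm_eq [tuple w i | i < n] [tuple w' i | i < n].
  by apply/allP => a _; rewrite /= -!/(letter_count _ _) E.
case/tuple_permP => p /val_inj/(congr1 (fun t : n.-tuple _ => tnth t _)) Hp.
exists p^-1%g; apply/ffunP => i; rewrite ffunE invgK.
by move: (Hp i); rewrite !tnth_mktuple.
Qed.

Lemma Wl_block_type (R : realType) (q n l : nat) (y x x' : block q n l) :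
  block_type x = block_type x' -> Wl R y x = Wl R y x'.
Proof.
move=> /ffunP E; apply: eq_bigr => s _.
move: (E s); rewrite !ffunE => /word_type_permw [p ->]; exact: PiCh_permw.
Qed.

Section SymmetricPowers.
Variable F : fieldType.

(* The k-th tensor powers of the rows of [G] are symmetric, hence live in a
   space of dimension 'C(k + T, k) indexed by sorted k-tuples. *)
Lemma tensor_power_dependence (T k m : nat) (G : 'I_m -> 'I_T.+1 -> F) :
  ('C(k + T, k) < m)%N ->
  exists2 c : 'I_m -> F, exists i, c i != 0 &
    forall f : {ffun 'I_k -> 'I_T.+1}, \sum_i c i * \prod_(s < k) G i (f s) = 0.
Proof.
rewrite -card_sorted_tuples.
set S := [set t : k.-tuple 'I_T.+1 | sorted leq (map val t)] => ltSm.
pose U : 'M[F]_(m, #|S|) :=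
  \matrix_(i, s) \prod_(x <- (enum_val s : k.-tuple 'I_T.+1)) G i x.
have nzK : kermx U != 0.
  rewrite kermx_eq0 /row_free; apply: contraTneq (rank_leq_col U) => ->.
  by rewrite -ltnNge.
have [[r c0] /= nz_c0] : exists rc, kermx U rc.1 rc.2 != 0.
  apply/existsP; apply: contraNT nzK => /existsPn nz.
  by apply/eqP/matrixP => r c; rewrite [in RHS]mxE; move/negbNE/eqP: (nz (r, c)).
exists (kermx U r); first by exists c0.
have sorted_col (s : 'I_#|S|) : \sum_i kermx U r i * U i s = 0.
  by have := congr1 (fun A => fun_of_matrix A r s) (mulmx_ker U); rewrite !mxE.
move=> f; pose t := sort_tuple (fun x y : 'I_T.+1 => (x <= y)%N) [tuple f s | s < k].
have tS : t \in S.
  by rewrite inE sorted_map; apply: sort_sorted => x y; exact: leq_total.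
apply: etrans (sorted_col (enum_rank_in tS t)); apply: eq_bigr => i _.
congr (_ * _); rewrite mxE enum_rankK_in // (perm_big [tuple f s | s < k]).
  by rewrite big_tuple; apply: eq_bigr => s _; rewrite tnth_mktuple.
by rewrite /= perm_sort.
Qed.

End SymmetricPowers.

Section SeparatedFamilies.
Variable F : realFieldType.

(* The row j with maximal |c j| cannot cancel its diagonal term. *)
Lemma power_dependence_bound (m k : nat) (a : 'I_m -> 'I_m -> F) (c : 'I_m -> F)
    (eps : F) (i0 : 'I_m) :
  c i0 != 0 -> 0 <= 1 - eps -> (forall i j, 0 <= a i j) ->
  (forall i, 1 - eps <= a i i) -> (forall i j, i != j -> a i j <= eps) ->
  (forall j, \sum_i c i * a i j ^+ k = 0) ->
  (1 - eps) ^+ k <= (m%:R - 1) * eps ^+ k.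
Proof.
move=> nz_c0 eps1 a_ge0 a_diag a_off c_ker.
have [j _ c_max] := @arg_maxP _ _ _ i0 xpredT (fun i => `|c i|) isT.
have cj_gt0 : 0 < `|c j| by apply: lt_le_trans (c_max i0 isT); rewrite normr_gt0.
move/eqP: (c_ker j); rewrite (bigD1 j) //= addr_eq0 => /eqP c_diag.
rewrite -(ler_pM2l cj_gt0).
apply: le_trans (_ : `|c j * a j j ^+ k| <= _).
  rewrite normrM ler_pM2l // ger0_norm ?exprn_ge0 //.
  by apply: lerXn2r; rewrite ?nnegrE.
rewrite c_diag normrN; apply: le_trans (ler_norm_sum _ _ _) _.
apply: le_trans (_ : \sum_(i | i != j) `|c j| * eps ^+ k <= _).
  apply: ler_sum => i ij; rewrite normrM ler_pM ?normr_ge0 //; first exact: c_max.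
  rewrite normrX ger0_norm //; apply: lerXn2r; rewrite ?nnegrE ?a_off //.
  exact: le_trans (a_off i j ij).
have m_gt0 : (0 < m)%N := leq_ltn_trans (leq0n j) (ltn_ord j).
have pred_m : (m.-1%:R : F) = m%:R - 1 by rewrite -[in RHS](prednK m_gt0) -natr1 addrK.
by rewrite sumr_const cardC1 card_ord -pred_m mulr_natl mulrnAr.
Qed.

Lemma separated_family_card (T k m : nat) (P h : 'I_m -> 'I_T -> F) (eps : F) :
  (0 < T)%N -> (forall i t, 0 <= P i t) -> (forall j t, 0 <= h j t) ->
  (forall i, 1 - eps <= \sum_t P i t * h i t) ->
  (forall i j, i != j -> \sum_t P i t * h j t <= eps) ->
  0 <= 1 - eps -> (m%:R - 1) * eps ^+ k < (1 - eps) ^+ k ->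
  (m <= 'C(k + T.-1, k))%N.
Proof.
case: T P h => // T P h _ P_ge0 h_ge0 P_diag P_off eps1.
apply: contraTleq => /(tensor_power_dependence P) [c [i0 nz_c0] c_ker].
rewrite -leNgt.
apply: (power_dependence_bound (a := fun i j => \sum_t P i t * h j t) nz_c0) => //.
  by move=> i j; apply: sumr_ge0 => t _; rewrite mulr_ge0.
move=> j.
have expand i : (\sum_t P i t * h j t) ^+ k =
    \sum_(f : {ffun 'I_k -> 'I_T.+1}) (\prod_(s < k) P i (f s)) * \prod_(s < k) h j (f s).
  rewrite -[k in LHS]card_ord -prodr_const bigA_distr_bigA.
  by apply: eq_bigr => f _; rewrite -big_split.
under eq_bigr do rewrite expand big_distrr.
rewrite exchange_big big1 //= => f _.
rewrite -[RHS](mul0r (\prod_(s < k) h j (f s))) -[X in X * _](c_ker f) big_distrl.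
by apply: eq_bigr => i _; rewrite mulrA.
Qed.

End SeparatedFamilies.

Section IDCodes.
Variables (R : realType) (q n l M : nat) (C : IDcode R q n l M).

Lemma lam_miss_lam_to i : lam_miss C i = 1 - lam_to C i i.
Proof.
rewrite /lam_miss /lam_to -(idQ_sum1 C i) -sumrB; apply: eq_bigr => x _.
rewrite -[X in X - _]mulr1 -mulrBr; congr (_ * _).
by rewrite -(Wl_sum1 R x) [in RHS](bigID (fun y => y \in idD C i)) /= addrC addrK.
Qed.

Lemma lam_miss_le_lambda1 i : lam_miss C i <= lambda1 C.
Proof. exact: le_bigmax. Qed.

Lemma lam_to_le_lambda2 i j : i != j -> lam_to C i j <= lambda2 C.
Proof.
move=> ij; apply: le_trans (le_bigmax _ _ i).
by apply: le_bigmax_cond; rewrite eq_sym.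
Qed.

(* Grouping inputs by block type turns the code into a family of distributions
   on the (n+1)^((q-1)l) types, to which [separated_family_card] applies. *)
Lemma id_code_card (M' k : nat) (eps : R) :
  (M' <= M)%N -> lambda1 C < eps -> lambda2 C < eps -> 0 <= 1 - eps ->
  (M'%:R - 1) * eps ^+ k < (1 - eps) ^+ k ->
  (M' <= 'C(k + ((n.+1 ^ q.-1) ^ l).-1, k))%N.
Proof.
move=> MM' lam1 lam2 eps1 Hk.
pose Ty := {ffun 'I_l -> {ffun 'I_q.-1 -> 'I_n.+1}}.
have card_Ty : #|Ty| = ((n.+1 ^ q.-1) ^ l)%N by rewrite !card_ffun !card_ord.
rewrite -card_Ty.
pose w (i : 'I_M') : 'I_M := widen_ord MM' i.
pose P (i : 'I_M') (t : 'I_#|Ty|) : R :=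
  \sum_(x | block_type x == enum_val t) idQ C (w i) x.
pose h (j : 'I_M') (t : 'I_#|Ty|) : R :=
  if [pick x | block_type x == enum_val t] is Some x
  then \sum_(y in idD C (w j)) Wl R y x else 0.
have lam_to_types i j : lam_to C (w i) (w j) = \sum_t P i t * h j t.
  rewrite /lam_to (partition_big (fun x => enum_rank (block_type x)) xpredT) //=.
  apply: eq_bigr => t _; rewrite /P big_distrl /=.
  apply: eq_big => [x|x /eqP tx]; first by apply/eqP/eqP => [<-|->]; rewrite ?enum_rankK ?enum_valK.
  congr (_ * _); rewrite /h; case: pickP => [x' /eqP tx'|]; last first.
    by move/(_ x); rewrite -tx enum_rankK eqxx.
  by apply: eq_bigr => y _; apply: Wl_block_type; rewrite tx' -tx enum_rankK.
apply: (separated_family_card (P := P) (h := h) (eps := eps)) => //.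
- by rewrite card_Ty !expn_gt0.
- by move=> i t; apply: sumr_ge0 => x _; exact: idQ_ge0.
- move=> j t; rewrite /h; case: pickP => // x _.
  by apply: sumr_ge0 => y _; exact: Wl_ge0.
- move=> i; rewrite -lam_to_types lerBlDr -lerBlDl -lam_miss_lam_to.
  exact/ltW/(le_lt_trans (lam_miss_le_lambda1 _)).
- move=> i j ij; rewrite -lam_to_types; apply/ltW/(le_lt_trans _ lam2).
  apply: lam_to_le_lambda2; apply: contra ij => /eqP/(congr1 val) wij.
  exact/eqP/val_inj.
Qed.

End IDCodes.

Lemma zero_shot_id_code (R : realType) (q n M : nat) (C : IDcode R q n 0 M) :
  (2 <= M)%N -> lambda1 C < 1 -> lambda2 C < 1 -> False.
Proof.
move=> M2 lam1 lam2.
have lam_to_card i j : lam_to C i j = #|idD C j|%:R.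
  rewrite /lam_to (eq_bigr (fun x => idQ C i x * #|idD C j|%:R)).
    by rewrite -big_distrl /= idQ_sum1 mul1r.
  by move=> x _; rewrite -sumr_const; congr (_ * _); apply: eq_bigr => y _; rewrite /Wl big_ord0.
have card_le1 j : (#|idD C j| <= 1)%N.
  by apply: leq_trans (max_card _) _; rewrite card_ffun card_ord.
pose i0 : 'I_M := Ordinal (ltnW M2); pose i1 : 'I_M := Ordinal M2.
have card_D0 : #|idD C i0| = 1%N.
  move: (le_lt_trans (lam_miss_le_lambda1 C i0) lam1) (card_le1 i0).
  by rewrite lam_miss_lam_to lam_to_card; case: #|_| => [|[|]] //=; rewrite subr0 ltxx.
have := le_lt_trans (lam_to_le_lambda2 C (isT : i1 != i0)) lam2.
by rewrite lam_to_card card_D0 ltxx.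
Qed.

Section Bernoulli.
Variable F : realFieldType.

Lemma exprD1_mulB_le1 (s : F) (j : nat) : 0 <= s -> (1 + s) ^+ j * (1 - j%:R * s) <= 1.
Proof.
move=> s_ge0; elim: j => [|j IH]; first by rewrite expr0 mul0r subr0 mul1r.
apply: le_trans IH; rewrite exprSr -mulrA ler_wpM2l ?exprn_ge0 ?addr_ge0 //.
have : 0 <= j%:R * s * s + s * s by rewrite addr_ge0 ?mulr_ge0.
rewrite -natr1; nra.
Qed.

Lemma exprD1_le2 (s : F) (j : nat) : 0 <= s -> j%:R * s <= 2^-1 -> (1 + s) ^+ j <= 2.
Proof.
move=> s_ge0 js; have := exprD1_mulB_le1 j s_ge0.
have : 0 <= (1 + s) ^+ j by rewrite exprn_ge0 ?addr_ge0.
nra.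
Qed.

Lemma powers_gap (z k : nat) (eps : F) :
  0 < eps -> eps * z.+1%:R <= 1 -> ((z ^ k)%:R - 1) * eps ^+ k < (1 - eps) ^+ k.
Proof.
move=> eps_gt0; rewrite -natr1 => eps_z.
have z_ge0 : 0 <= z%:R :> F by [].
have eps_ge0 := ltW eps_gt0.
apply: lt_le_trans (_ : (z ^ k)%:R * eps ^+ k <= _).
  by rewrite ltr_pM2r ?exprn_gt0 // ltrBlDr ltrDl.
rewrite natrX -exprMn; apply: lerXn2r; rewrite ?nnegrE ?mulr_ge0 //; nra.
Qed.

End Bernoulli.

(* Compare with the coefficient of t^k in (1 + t)^(k + T), for t = 1/(2(m+1)). *)
Lemma binomial_lt_sqr_exp (T k m : nat) :
  (0 < k)%N -> (8 <= m)%N -> (T.+1 <= k * m)%N -> ('C(k + T, k) < (m ^ 2) ^ k)%N.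
Proof.
move=> k_gt0 m8 Tkm; set N := (k + T)%N.
have m1_gt0 : (0 : rat) < m.+1%:R by rewrite ltr0n.
set t : rat := (2 * m.+1%:R)^-1.
have t_gt0 : 0 < t by rewrite invr_gt0 mulr_gt0.
have t_ge0 := ltW t_gt0.
have coef_le : 'C(N, k)%:R * t ^+ k <= (1 + t) ^+ N.
  have kN : (k < N.+1)%N by rewrite ltnS leq_addr.
  rewrite exprDn (bigD1 (Ordinal kN)) //= expr1n mul1r mulr_natl lerDl.
  by apply: sumr_ge0 => i _; rewrite mulrn_wge0 // mulr_ge0 ?exprn_ge0.
have pow_le : (1 + t) ^+ N <= 2 ^+ k.
  apply: le_trans (_ : (1 + t) ^+ (m.+1 * k) <= _).
    by apply: ler_weXn2l; rewrite ?lerDl //; move: Tkm; rewrite /N; lia.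
  rewrite exprM; apply: lerXn2r; rewrite ?nnegrE ?exprn_ge0 ?addr_ge0 //.
  apply: exprD1_le2 => //.
  by rewrite /t invfM mulrCA mulfV ?gt_eqF // mulr1.
have : ('C(N, k)%:R : rat) <= (4 * m.+1%:R) ^+ k.
  rewrite -(ler_pM2r (exprn_gt0 k t_gt0)) -exprMn.
  have -> : 4 * m.+1%:R * t = 2 by rewrite /t; field; rewrite gt_eqF.
  exact: le_trans coef_le pow_le.
rewrite -(ltr_nat rat) natrX; move/le_lt_trans; apply.
rewrite ltrXn2r -?lt0n // ?nnegrE ?mulr_ge0 // -natrM ltr_nat.
by move: m8; clear; nia.
Qed.

Lemma succ_exp_mul_le (n j : nat) : (n.+1 ^ j * (n - j) <= n ^ j.+1)%N.
Proof.
elim: j => [|j IH]; first by rewrite expn0 mul1n subn0 expn1.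
apply: leq_trans (_ : n.+1 ^ j * (n - j) * n <= _)%N; last by rewrite expnSr leq_mul2r IH orbT.
rewrite expnS (mulnC n.+1) -!mulnA leq_mul2l; apply/orP; right.
nia.
Qed.

Lemma succ_exp_le_double (n l : nat) : (2 * l <= n)%N -> (n.+1 ^ l <= 2 * n ^ l)%N.
Proof.
case: n => [|n] l2n; first by move: l2n; rewrite leqn0 muln_eq0 => /= /eqP ->.
rewrite -(leq_pmul2r (ltn0Sn n)).
apply: leq_trans (_ : n.+2 ^ l * (2 * (n.+1 - l)) <= _)%N.
  by rewrite leq_mul2l; apply/orP; right; lia.
by rewrite mulnCA -mulnA -expnSr leq_pmul2l // succ_exp_mul_le.
Qed.

Lemma card_block_types_le (e n l : nat) : (2 * l <= n)%N ->
  ((n.+1 ^ e) ^ l <= 2 ^ e * n ^ (l * e))%N.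
Proof.
move=> l2n; case: e => [|e]; first by rewrite !expn0 muln0 expn0 exp1n.
by rewrite -expnAC expnM -expnMn leq_exp2r ?succ_exp_le_double.
Qed.

Lemma sqr_le_exp2 (b : nat) : (4 <= b)%N -> (b ^ 2 <= 2 ^ b)%N.
Proof.
move=> /subnK <-; elim: (b - 4)%N => // d IH.
rewrite addSn [X in (_ <= X)%N]expnS; apply: leq_trans (leq_mul (leqnn 2) IH).
by rewrite !expnS expn0; nia.
Qed.

Section Archimedean.
Variable F : archiRealFieldType.

Lemma le_mul_of_truncn_div_lt (r x : F) (N : nat) :
  0 < r -> (Num.truncn (x / r) < N)%N -> x <= r * N%:R.
Proof.
move=> r_gt0 xN; rewrite mulrC -ler_pdivrMr //.
by apply/ltW/(lt_le_trans (truncnS_gt _)); rewrite ler_nat.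
Qed.

Lemma exp2_dominates (rate : F) (K : nat) :
  0 < rate -> exists2 b : nat, (4 <= b)%N & 4 * b%:R * K%:R <= rate * (2 ^ b)%:R.
Proof.
move=> rate_gt0; set b := maxn 4 (Num.truncn (4 * K%:R / rate)).+1.
exists b; first exact: leq_maxl.
have rate_b : 4 * K%:R <= rate * b%:R by apply: le_mul_of_truncn_div_lt; rewrite // leq_maxr.
have : b%:R ^+ 2 <= (2 ^ b)%:R :> F by rewrite -natrX ler_nat sqr_le_exp2 ?leq_maxl.
have : 0 <= b%:R :> F by []; nra.
Qed.

End Archimedean.

Section RealPowers.
Variable R : realType.

Lemma powR_root_le (mu y x c : R) :
  0 < mu -> 0 <= y -> 1 <= x -> 1 <= c -> powR y mu^-1 <= x -> y <= powR x (c * mu).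
Proof.
move=> mu_gt0 y_ge0 x_ge1 c_ge1 root_le.
apply: le_trans (_ : powR x mu <= _); last by rewrite ler_powR // ler_peMl // ltW.
rewrite -[X in X <= _](powRr1 y_ge0) -(mulVf (lt0r_neq0 mu_gt0)) powRrM.
have x_ge0 := le_trans ler01 x_ge1.
by apply: ge0_ler_powR; rewrite ?nnegrE ?powR_ge0 // ltW.
Qed.

Lemma subcode_card_le (rate : R) (b K N T M : nat) :
  0 < rate -> 4 * b%:R * K%:R <= rate * (2 ^ b)%:R -> 4 * b%:R <= rate * N%:R ->
  (T <= K * N)%N -> powR 2 (rate * N%:R) <= M%:R ->
  (((2 ^ b) ^ 2) ^ (T %/ 2 ^ b).+1 <= M)%N.
Proof.
set m := (2 ^ b)%N; set k := (T %/ m).+1 => rate_gt0 bK rate_b T_KN HM.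
have m_gt0 : 0 < m%:R :> R by rewrite ltr0n expn_gt0.
have km : k%:R * m%:R <= K%:R * N%:R + m%:R :> R.
  by rewrite -!natrM -natrD ler_nat mulSn addnC leq_add2r (leq_trans (leq_trunc_div _ _)).
have bk_rate : 2 * b%:R * k%:R <= rate * N%:R.
  have := ler_wpM2r (ler0n R N) bK; have := ler_wpM2r (ltW m_gt0) rate_b.
  have : 0 <= b%:R :> R by [].
  rewrite -(ler_pM2r m_gt0); nra.
rewrite -(ler_nat R); apply: le_trans HM.
rewrite -expnM -expnM natrX -powR_mulrn // ler_powR ?ler1n // natrM natrM.
by rewrite mulrCA mulrA.
Qed.

End RealPowers.

Lemma no_long_id_code (R : realType) (q : nat) (mu rate : R) :
  (2 <= q)%N -> 0 < mu -> 0 < rate ->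
  exists n0 : nat, forall (n l M : nat) (C : IDcode R q n l M),
    (n0 <= n)%N -> (0 < l)%N -> (2 * l <= n)%N ->
    powR 2 (rate * (n ^ (l * (q - 1)))%:R) <= M%:R ->
    lambda1 C < powR n%:R (- (l%:R * mu)) ->
    lambda2 C < powR n%:R (- (l%:R * mu)) -> False.
Proof.
move=> q2 mu_gt0 rate_gt0.
have [b b4 bK] := exp2_dominates (2 ^ q.-1) rate_gt0; set m := (2 ^ b)%N.
have m8 : (8 <= m)%N by rewrite (leq_trans _ (leq_pexp2l _ b4)).
set X : R := (m ^ 2).+1%:R.
exists (maxn (Num.truncn (powR X mu^-1)) (Num.truncn (4 * b%:R / rate))).+1.
move=> n l M C; rewrite gtn_max => /andP[nX nb] l_gt0 l2n HM lam1 lam2.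
set eps := powR n%:R (- (l%:R * mu)); set T := ((n.+1 ^ q.-1) ^ l)%N.
have eps_gt0 : 0 < eps by rewrite powR_gt0 // ltr0n (leq_trans _ nX).
have eps_X : eps * X <= 1.
  rewrite /eps powRN ler_pdivrMl ?powR_gt0 ?ltr0n ?(leq_trans _ nX) // mulr1.
  apply: powR_root_le; rewrite ?ler0n ?ler1n ?(leq_trans _ nX) //.
  by apply/ltW/(lt_le_trans (truncnS_gt _)); rewrite ler_nat.
have X_ge1 : 1 <= X by rewrite ler1n.
have eps1 : 0 <= 1 - eps by nra.
(* Test the code on its first m^(2k) messages, k = T %/ m + 1. *)
have small_code : ((m ^ 2) ^ (T %/ m).+1 <= M)%N.
  apply: (subcode_card_le rate_gt0 bK) HM; last by rewrite /T -subn1 card_block_types_le.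
  apply: le_mul_of_truncn_div_lt => //; apply: leq_trans nb _.
  by rewrite -{1}(expn1 n) leq_pexp2l ?(leq_trans _ nX) // muln_gt0 l_gt0 subn_gt0.
have := id_code_card small_code lam1 lam2 eps1 (powers_gap _ eps_gt0 eps_X).
rewrite leqNgt binomial_lt_sqr_exp //.
by rewrite prednK ?expn_gt0 // ltnW // ltn_ceil ?expn_gt0.
Qed.

Lemma double_le_of_ratio_lt_half (R : realType) (l n : nat) :
  (0 < n)%N -> (l%:R / n%:R : R) < 2^-1 -> (2 * l <= n)%N.
Proof.
move=> n_gt0; rewrite ltr_pdivrMr ?ltr0n // => ln.
by rewrite -(ler_nat R) natrM; apply/ltW; lra.
Qed.

Local Open Scope classical_set_scope.
Local Open Scope ring_scope.
Unset Implicit Arguments.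

Theorem theorem2 (R : realType) (q : nat) (mu rate : R) :
  (2 <= q)%N -> 0 < mu -> 0 < rate ->
  forall (n l M : nat -> nat) (C : forall i, IDcode R q (n i) (l i) (M i)),
  ~ [/\ (forall B : nat, exists N : nat, forall i, (N <= i)%N -> (B <= n i)%N),
        (fun i => (l i)%:R / (n i)%:R : R) @ \oo --> (0 : R),
        (forall i, powR 2 (rate * ((n i) ^ (l i * (q - 1)))%:R) <= (M i)%:R),
        (forall i, lambda1 (C i) < powR (n i)%:R (- ((l i)%:R * mu)))
      & (forall i, lambda2 (C i) < powR (n i)%:R (- ((l i)%:R * mu)))].
Proof.
move=> q2 mu_gt0 rate_gt0 n l M C [n_unbounded l_n_cvg0 HM lam1 lam2].
have [n0 no_code] := no_long_id_code q2 mu_gt0 rate_gt0.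
have [N1 n_large] := n_unbounded n0.+1.
have half_gt0 : (0 : R) < 2^-1 by rewrite invr_gt0.
move/cvgr_lt/(_ _ half_gt0): l_n_cvg0 => [N2 _ l_small].
pose i := maxn N1 N2; have n_ge := n_large i (leq_maxl _ _).
have l2n := double_le_of_ratio_lt_half (leq_ltn_trans (leq0n n0) n_ge) (l_small i (leq_maxr _ _)).
move: (C i) (HM i) (lam1 i) (lam2 i) l2n; case: (l i) => [|l'] Ci HMi lam1i lam2i l2n.
- apply: (zero_shot_id_code (C := Ci)).
  + rewrite -(ltr_nat R); apply: lt_le_trans HMi.
    rewrite mul0n expn0 mulr1 /powR (negbTE (_ : (2 : R) != 0)) //.
    by rewrite expR_gt1 mulr_gt0 // ln_gt0 // ltr1n.
  + by move: lam1i; rewrite mul0r oppr0 powRr0.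
  + by move: lam2i; rewrite mul0r oppr0 powRr0.
- exact: (no_code _ _ _ Ci (ltnW n_ge)).
Qed.
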